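(* Let $\mathbf{F}$ be a field of characteristic $3$, let $\lambda=(\lambda_1,\lambda_2)$ be a partition and let $u\in\mathbf{N}$ satisfy $3^u\le\lambda_2$. Then the $\mathbf{F}$-span of $\{b(k):0\le k<3^u\}$ is a subalgebra of $S_\mathbf{F}(\lambda)$.
   Context: $S_\mathbf{F}(\lambda)=\operatorname{End}_{\mathbf{F}S_r}(M^\lambda)$ ($M^\lambda$ the permutation module on cosets of $S_{\lambda_1}\times S_{\lambda_2}$) is a commutative $\mathbf{F}$-algebra with basis $b(0)=\mathbf{1},b(1),\dots,b(\lambda_2)$ and multiplication $b(i)b(j)=\sum_{h=\max\{i,j\}}^{i+j}\binom{h}{i}\binom{h}{j}\binom{m+i+j}{i+j-h}b(h)$, where $m=\lambda_1-\lambda_2$ and $b(a)=0$ for $a>\lambda_2$. *)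

From HB Require Import structures.
From mathcomp Require Import all_boot all_order all_algebra.
Set Implicit Arguments. Unset Strict Implicit. Unset Printing Implicit Defensive.
Import GRing.Theory.
Local Open Scope ring_scope.

(* The Schur algebra S_F(lambda), lambda = (l1, l2), realised on its basis
   b(0), ..., b(l2): an element is the row vector of its coordinates
   ('rV[F]_(l2.+1)), entry k being the coefficient of b(k). *)

(* Structure constant: coefficient of b(h) in b(i) b(j), with m = l1 - l2.
   It is 'C(h,i) 'C(h,j) 'C(m+i+j, i+j-h) for max i j <= h <= i+j, else 0. *)
Definition schur_coef (m i j h : nat) : nat :=
  if (maxn i j <= h <= i + j)%N
  then ('C(h, i) * 'C(h, j) * 'C(m + i + j, i + j - h))%N
  else 0%N.

(* The basis element b(k) (b(k) = 0 for k > l2). *)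
Definition schur_b (F : fieldType) (l2 k : nat) : 'rV[F]_(l2.+1) :=
  \row_(h < l2.+1) (h == k :> nat)%:R.

(* Multiplication of S_F(lambda): bilinear extension of
   b(i) b(j) = sum_h coef(i,j,h) b(h), terms with h > l2 being 0. *)
Definition schur_mul (F : fieldType) (l1 l2 : nat)
    (x y : 'rV[F]_(l2.+1)) : 'rV[F]_(l2.+1) :=
  \row_(h < l2.+1) \sum_(i < l2.+1) \sum_(j < l2.+1)
     x 0 i * y 0 j * (schur_coef (l1 - l2) i j h)%:R.

(* Matrix whose rows are b(0), ..., b(3^u - 1); its row space (in the
   sense of mxalgebra, (x <= _)%MS) is the F-span of {b(k) : k < 3^u}. *)
Definition schur_span (F : fieldType) (l2 u : nat) : 'M[F]_(3 ^ u, l2.+1) :=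
  \matrix_(k < 3 ^ u) schur_b F l2 k.

From HB Require Import structures.
From mathcomp Require Import all_boot all_order all_algebra.
From mathcomp Require Import zify.
Import GRing.Theory.
Local Open Scope ring_scope.

(* In coordinates, the span of b(0), ..., b(n-1) consists of the
   row vectors whose entries vanish at every index h >= n, so it contains
   b(0) (for n > 0) and is closed under sums and scalar multiples.  It is
   closed under the product as soon as every structure constant
   coef(i, j, h) with i, j < n <= h vanishes in F.  For n = p^u and char F = p
   this holds because p divides such a constant: writing h = p^u + a with
   a < max(i, j), one of the factors 'C(h, i), 'C(h, j) is 'C(p^u + a, c)
   with a < c < p^u, and Vandermonde's identity expands it into terms each
   containing a factor 'C(p^u, d) with 0 < d < p^u, divisible by p. *)

Lemma prime_dvd_bin_pow p u k :
  prime p -> (0 < k < p ^ u)%N -> (p %| 'C(p ^ u, k))%N.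
Proof.
move=> p_pr; case: k => [//|k] /= k_lt.
apply/negPn/negP => ndvd.
have cop : coprime (p ^ u) 'C(p ^ u, k.+1).
  by apply: coprimeXl; rewrite prime_coprime.
have : (p ^ u %| k.+1 * 'C(p ^ u, k.+1))%N by rewrite -mul_bin_diag dvdn_mulr.
by rewrite Gauss_dvdl // => /dvdn_leq => /(_ isT); lia.
Qed.

(* Lucas-type consequence: 'C(p^u + a, c) is divisible by p when a < c < p^u,
   since every term of the Vandermonde expansion has such a factor. *)
Lemma prime_dvd_bin_pow_add p u a c :
  prime p -> (a < c)%N -> (c < p ^ u)%N -> (p %| 'C(p ^ u + a, c))%N.
Proof.
move=> p_pr a_lt_c c_lt; rewrite -binomial.Vandermonde; apply: dvdn_sum => d _.
have [->|d_gt0] := posnP d; first by rewrite subn0 (bin_small a_lt_c) muln0.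
apply/dvdn_mulr/prime_dvd_bin_pow => //.
by rewrite d_gt0 /=; have := ltn_ord d; lia.
Qed.

Lemma prime_dvd_schur_coef p m u i j h :
  prime p -> (i < p ^ u)%N -> (j < p ^ u)%N -> (p ^ u <= h)%N ->
  (p %| schur_coef m i j h)%N.
Proof.
move=> p_pr i_lt j_lt h_ge; rewrite /schur_coef.
case: ifP => [/andP [max_le h_le]|//].
have h_eq : h = (p ^ u + (h - p ^ u))%N by lia.
have [a_lt_i|a_ge_i] := ltnP (h - p ^ u) i.
  by rewrite -mulnA; apply: dvdn_mulr; rewrite h_eq prime_dvd_bin_pow_add.
have [a_lt_j|a_ge_j] := ltnP (h - p ^ u) j; last by lia.
by apply/dvdn_mulr/dvdn_mull; rewrite h_eq prime_dvd_bin_pow_add.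
Qed.

Definition supported_below {F : fieldType} {l2 : nat} (n : nat) (x : 'rV[F]_(l2.+1)) :=
  forall k : 'I_(l2.+1), (n <= k)%N -> x 0 k = 0.

Lemma sub_schur_spanP (F : fieldType) l2 u (x : 'rV[F]_(l2.+1)) :
  (x <= schur_span F l2 u)%MS <-> supported_below (3 ^ u) x.
Proof.
have b_off (r : 'I_(3 ^ u)) (k : 'I_(l2.+1)) :
    (3 ^ u <= k)%N -> schur_span F l2 u r k = 0.
  by move=> k_ge; rewrite !mxE; have := ltn_ord r; case: eqP => //; lia.
split.
  move/submxP => [w ->] k k_ge; rewrite !mxE; apply: big1 => r _.
  by rewrite b_off ?mulr0.
move=> x_supp; apply/submxP.
pose w := \row_(r < 3 ^ u)
  (if (r < l2.+1)%N =P true is ReflectT r_lt then x 0 (Ordinal r_lt) else 0).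
exists w; apply/rowP => k; rewrite !mxE.
have [k_lt|k_ge] := ltnP k (3 ^ u); last first.
  by rewrite x_supp // big1 // => r _; rewrite b_off ?mulr0.
rewrite (bigD1 (Ordinal k_lt)) //= big1 ?addr0 => [|r r_ne].
  rewrite !mxE eqxx mulr1; case: eqP => [k_lt'|[]]; last exact: (ltn_ord k).
  by congr (x 0 _); apply: val_inj.
rewrite !mxE; have [k_eq|k_ne] := eqVneq (k : nat) r; last by rewrite mulr0.
by case/eqP: r_ne; apply: val_inj.
Qed.

Lemma schur_mul_supported_below (F : fieldType) l1 l2 n (x y : 'rV[F]_(l2.+1)) :
  (forall i j h, (i < n)%N -> (j < n)%N -> (n <= h)%N ->
     (schur_coef (l1 - l2) i j h)%:R = 0 :> F) ->
  supported_below n x -> supported_below n y ->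
  supported_below n (schur_mul l1 x y).
Proof.
move=> coef0 x_supp y_supp k k_ge; rewrite mxE.
apply: big1 => i _; apply: big1 => j _.
have [i_lt|i_ge] := ltnP i n; last by rewrite x_supp // !mul0r.
have [j_lt|j_ge] := ltnP j n; last by rewrite y_supp // mulr0 mul0r.
by rewrite coef0 ?mulr0.
Qed.

Theorem lemma3p2 (F : fieldType) (l1 l2 u : nat)
  (hchar : (3 \in [pchar F])%N) (hpart : (l2 <= l1)%N) (hu : (3 ^ u <= l2)%N) :
  let V := schur_span F l2 u in
  (schur_b F l2 0 <= V)%MS /\
  (forall x y : 'rV[F]_(l2.+1), (x <= V)%MS -> (y <= V)%MS ->
     [/\ ((x + y)%R <= V)%MS,
         forall a : F, ((a *: x)%R <= V)%MS &
         (schur_mul l1 x y <= V)%MS]).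
Proof.
move=> V; split.
  apply/sub_schur_spanP => k k_ge; rewrite mxE.
  suff -> : (k == 0 :> nat) = false by [].
  by have := expn_gt0 3 u; lia.
move=> x y /sub_schur_spanP x_supp /sub_schur_spanP y_supp; split.
- by apply/sub_schur_spanP => k k_ge; rewrite mxE x_supp // y_supp // addr0.
- by move=> a; apply/sub_schur_spanP => k k_ge; rewrite mxE x_supp // mulr0.
apply/sub_schur_spanP; apply: schur_mul_supported_below => // i j h i_lt j_lt h_ge.
by apply/eqP; rewrite -(dvdn_pcharf hchar); apply: (@prime_dvd_schur_coef 3 _ u).
Qed.
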